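(* Let $\mathscr G=(\mathscr V,\mathscr E)$ be a finite connected graph with $N$ vertices, let $M\ge 0$ be an integer, and let $(Z_t)_{t\in\mathbb N}$ be the uniform saving model on $\mathscr G$ with $M$ coins, started from an arbitrary configuration. Then for every vertex $x\in\mathscr V$ and every $c\in\{0,1,\dots,M\}$, $$\lim_{t\to\infty}P(Z_t(x)=c)=(c+1)\binom{M-c+2N-3}{2N-3}\Big/\binom{M+2N-1}{2N-1}.$$ In particular, when $N$ and $T=M/N$ are large, $\lim_{t\to\infty}P(Z_t(x)=c)\approx \frac{4c}{T^2} e^{-2c/T}$.
   Context: A configuration is a map $\xi:\mathscr V\to\mathbb N$; $\mathscr C_{N,M}$ denotes the set of configurations with $\sum_x\xi(x)=M$. The uniform saving model is the discrete-time Markov chain on $\mathscr C_{N,M}$ evolving as follows: at each time step $t$, an edge $(x,y)\in\mathscr E$ is chosen uniformly at random; independent random variables $U_1$ uniform on $\{0,\dots,Z_t(x)\}$ and $U_2$ uniform on $\{0,\dots,Z_t(y)\}$ are drawn; given $U_1=c_x$, $U_2=c_y$, a random variable $U$ uniform on $\{0,1,\dots,Z_t(x)+Z_t(y)-c_x-c_y\}$ is drawn; then $Z_{t+1}(x)=c_x+U$, $Z_{t+1}(y)=Z_t(x)+Z_t(y)-c_x-U$, and $Z_{t+1}(z)=Z_t(z)$ for $z\notin\{x,y\}$. *)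

From HB Require Import structures.
From mathcomp Require Import all_boot all_order all_algebra.
From mathcomp Require Import all_classical all_reals all_analysis.
Set Implicit Arguments. Unset Strict Implicit. Unset Printing Implicit Defensive.
Import Order.TTheory GRing.Theory Num.Theory.
Local Open Scope ring_scope.

Section UniformSaving.
Variables (R : realType) (V : finType) (e : rel V) (M : nat).

(* Configurations with values in {0..M}; the model lives on those with
   total mass M (the set C_{N,M}). *)
Definition config := {ffun V -> 'I_M.+1}.

Definition in_CNM (xi : config) : bool := (\sum_(x : V) nat_of_ord (xi x) == M)%N.

Definition edges : {set V * V} := [set p | e p.1 p.2].

(* The configuration obtained from xi after the exchange on edge (x,y)
   with U_1 = cx and U = u. *)
Definition update (xi : config) (x y : V) (cx u : nat) : V -> nat :=
  fun z => if z == x then (cx + u)%N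
           else if z == y then (xi x + xi y - cx - u)%N
           else nat_of_ord (xi z).

Definition step_prob (xi xi' : config) : R :=
  (#|edges|%:R)^-1 *
  \sum_(p in edges)
    \sum_(cx < (xi p.1).+1) \sum_(cy < (xi p.2).+1)
      \sum_(u < (xi p.1 + xi p.2 - cx - cy).+1)
        (((xi p.1).+1%:R)^-1 * ((xi p.2).+1%:R)^-1 *
         ((xi p.1 + xi p.2 - cx - cy).+1%:R)^-1 *
         (if [forall z, nat_of_ord (xi' z) == update xi p.1 p.2 cx u z]
          then 1 else 0)).

Fixpoint law (xi0 : config) (t : nat) : config -> R :=
  match t with
  | 0 => fun xi => (xi == xi0)%:R
  | t'.+1 => fun xi' => \sum_(xi : config) law xi0 t' xi * step_prob xi xi'
  end.

Definition prob_at (xi0 : config) (t : nat) (x : V) (c : nat) : R :=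
  \sum_(xi : config | nat_of_ord (xi x) == c) law xi0 t xi.

End UniformSaving.

From HB Require Import structures.
From mathcomp Require Import all_boot all_order all_algebra.
From mathcomp Require Import all_classical all_reals all_analysis.
From mathcomp Require Import zify ring.
Import Order.TTheory GRing.Theory Num.Theory numFieldNormedType.Exports.
Local Open Scope classical_set_scope.
Local Open Scope ring_scope.
Set Implicit Arguments. Unset Strict Implicit. Unset Printing Implicit Defensive.

(* The uniform saving model is reversible.  If an edge carries [a] and [b]
   coins, the chain replaces them by [a'] and [b'] with probability
   [G(a,b,a',b') / ((a+1)(b+1))], where
   [G(a,b,a',b') = sum_(c <= min(a,a'), d <= min(b,b')) 1 / (a+b-c-d+1)]
   is symmetric under [(a,b) <-> (a',b')]; hence [pi(xi) ~ prod_v (xi v + 1)]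
   is in detailed balance on [C_{N,M}].  Following a height function that
   decreases towards [x], every configuration can push all of its coins onto
   [x], and that configuration has positive holding probability; this gives a
   Doeblin minorization, hence geometric convergence to [pi] in total
   variation.  Finally, [sum_(i <= M) (i+1) X^i] agrees with [(1-X)^-2] up to
   degree [M], so the mass of [pi] and its marginal at [x] are coefficients of
   [(1-X)^-2N] and [X^c (1-X)^-2(N-1)]. *)

Lemma ler_sum_term (R : numDomainType) (I : finType) (F : I -> R) (i : I) :
  (forall j, 0 <= F j) -> F i <= \sum_j F j.
Proof.
by move=> F_ge0; rewrite (bigD1 i) //= lerDl; apply: sumr_ge0 => j _.
Qed.

Lemma fin_uniform_index (T : finType) (A : pred T) (Q : T -> nat -> Prop) :
  (forall a n m, (n <= m)%N -> Q a n -> Q a m) ->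
  (forall a, A a -> exists n, Q a n) -> exists n, forall a, A a -> Q a n.
Proof.
move=> Q_mono QA.
have [f Qf] : exists f : T -> nat, forall a, A a -> Q a (f a).
  apply: (@fin_all_exists _ _ (fun a n => A a -> Q a n)) => a.
  by case: (boolP (A a)) => [/QA[n Qn] | _]; [exists n | exists 0%N].
by exists (\max_a f a) => a Aa; apply: Q_mono (leq_bigmax a) (Qf a Aa).
Qed.

Lemma fin_lower_bound_gt0 (R : realDomainType) (T : finType) (A : pred T)
    (f : T -> R) :
  (forall a, A a -> 0 < f a) -> exists2 d, 0 < d & forall a, A a -> d <= f a.
Proof.
move=> f_gt0; case: (pickP A) => [a0 Aa0 | A0]; last by exists 1 => // a; rewrite A0.
by case: (arg_minP f Aa0) => a Aa f_min; exists (f a) => //; apply: f_gt0.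
Qed.

Lemma bigD2 (T : Type) (idx : T) (op : Monoid.com_law idx) (I : finType)
    (F : I -> T) x y : x != y ->
  \big[op/idx]_i F i =
  op (F x) (op (F y) (\big[op/idx]_(i | (i != x) && (i != y)) F i)).
Proof.
move=> xy; rewrite (bigD1 x) //= (bigD1 y) /=; last by rewrite eq_sym.
by congr (op _ (op _ _)); apply: eq_bigl => i; rewrite andbC.
Qed.

Lemma sumr_ord_div (R : numFieldType) n (a : R) : \sum_(i < n.+1) a / n.+1%:R = a.
Proof.
by rewrite sumr_const card_ord -mulrnAr -[_^-1 *+ _]mulr_natr mulVf ?mulr1 ?pnatr_eq0.
Qed.

Lemma sum_indicator_leq (R : pzSemiRingType) (f : nat -> R) n k :
  \sum_(i < n.+1) (i <= k)%N%:R * f i = \sum_(0 <= i < (minn n k).+1) f i.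
Proof.
elim: n => [|n IHn]; first by rewrite min0n big_ord1 big_nat1 /= mul1r.
rewrite big_ord_recr IHn /=; case: (leqP n.+1 k) => [le_n1k | lt_kn1].
  by rewrite (minn_idPl (ltnW le_n1k)) mul1r [RHS]big_nat_recr.
by rewrite (minn_idPr (_ : k <= n)%N) ?mul0r ?addr0 // -ltnS.
Qed.

Lemma binC n k : 'C(n + k, n) = 'C(n + k, k).
Proof. by rewrite -{2}[n](addnK k) bin_sub ?leq_addl. Qed.

Lemma hockey_stick k m : (\sum_(j < m.+1) 'C(j + k, j))%N = 'C(m + k + 1, m).
Proof.
elim: m => [|m IHm]; first by rewrite big_ord1 !bin0.
rewrite big_ord_recr /= IHm -[(m.+1 + k + 1)%N]/((m + k + 1).+1)%N.
by rewrite binS addnC addn1 addSn.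
Qed.

Lemma hockey_stick_weighted k m :
  (\sum_(j < m.+1) 'C(j + k, j) * (m - j).+1)%N = 'C(m + k + 2, m).
Proof.
elim: m => [|m IHm]; first by rewrite big_ord1 !bin0.
have -> : (\sum_(j < m.+2) 'C(j + k, j) * (m.+1 - j).+1 =
   \sum_(j < m.+2) 'C(j + k, j) * (m.+1 - j) + \sum_(j < m.+2) 'C(j + k, j))%N.
  by rewrite -big_split /=; apply: eq_bigr => j _; rewrite mulnS addnC.
rewrite hockey_stick big_ord_recr /= subnn muln0 addn0.
have -> : (\sum_(j < m.+1) 'C(j + k, j) * (m.+1 - j) =
           \sum_(j < m.+1) 'C(j + k, j) * (m - j).+1)%N.
  by apply: eq_bigr => j _; rewrite subSn // -ltnS.
rewrite IHm (_ : m.+1 + k + 1 = m + k + 2)%N; last by lia.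
by rewrite -[(m.+1 + k + 2)%N]/((m + k + 2).+1)%N binS addnC.
Qed.

Section MarkovChain.
Variables (R : realType) (S : finType) (P : S -> S -> R).

Fixpoint nstep (n : nat) (a : S) : S -> R :=
  match n with
  | 0 => fun b => (b == a)%:R
  | n'.+1 => fun b => \sum_c nstep n' a c * P c b
  end.

Lemma nstep_add m n a b :
  nstep (m + n) a b = \sum_c nstep m a c * nstep n c b.
Proof.
elim: n b => [|n IHn] b.
  rewrite addn0 (bigD1 b) //= eqxx mulr1 big1 ?addr0 // => c /negbTE.
  by rewrite eq_sym => ->; rewrite mulr0.
rewrite addnS /=; under eq_bigr do rewrite IHn mulr_suml.
rewrite exchange_big; apply: eq_bigr => c _ /=.
by rewrite mulr_sumr; apply: eq_bigr => d _; rewrite mulrA.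
Qed.

Lemma nstepSl n a b : nstep n.+1 a b = \sum_c P a c * nstep n c b.
Proof.
rewrite -add1n nstep_add; apply: eq_bigr => c _ /=; congr (_ * _).
rewrite (bigD1 a) //= eqxx mul1r big1 ?addr0 // => d /negbTE ->.
by rewrite mul0r.
Qed.

Hypothesis P_ge0 : forall a b, 0 <= P a b.

Lemma nstep_ge0 n a b : 0 <= nstep n a b.
Proof.
elim: n b => [|n IHn] b /=; first exact: ler0n.
by apply: sumr_ge0 => c _; apply: mulr_ge0.
Qed.

Variable A : pred S.
Hypothesis P_sum1 : forall a, A a -> \sum_b P a b = 1.
Hypothesis P_closed : forall a b, A a -> ~~ A b -> P a b = 0.

Lemma nstep_closed n a b : A a -> ~~ A b -> nstep n a b = 0.
Proof.
move=> Aa; elim: n b => [|n IHn] b nAb /=.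
  by case: eqP nAb => // ->; rewrite Aa.
apply: big1 => c _; case: (boolP (A c)) => Ac.
  by rewrite P_closed ?mulr0.
by rewrite IHn ?mul0r.
Qed.

Lemma nstep_sum1 n a : A a -> \sum_b nstep n a b = 1.
Proof.
move=> Aa; elim: n => [|n IHn] /=.
  by rewrite (bigD1 a) //= eqxx big1 ?addr0 // => b /negbTE ->.
rewrite exchange_big /= -[RHS]IHn; apply: eq_bigr => c _.
rewrite -mulr_sumr; case: (boolP (A c)) => Ac; first by rewrite P_sum1 ?mulr1.
by rewrite nstep_closed ?mul0r.
Qed.

Lemma nstep_le1 n a b : A a -> nstep n a b <= 1.
Proof.
by move=> Aa; rewrite -(nstep_sum1 n Aa); apply: ler_sum_term => c; apply: nstep_ge0.
Qed.

(* Removing the mass [del] that every row puts at [s] leaves rows of mass [1 - del]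
   and does not change [\sum_a d a * _], since [\sum_a d a = 0]. *)
Lemma doeblin_contraction (d : S -> R) n s del :
    (forall a, ~~ A a -> d a = 0) -> \sum_a d a = 0 ->
    (forall a, A a -> del <= nstep n a s) ->
  \sum_b `|\sum_a d a * nstep n a b| <= (1 - del) * \sum_a `|d a|.
Proof.
move=> d_out d_sum0 minor.
pose w a b := nstep n a b - del * (b == s)%:R.
have dw b : \sum_a d a * nstep n a b = \sum_a d a * w a b.
  under [RHS]eq_bigr do rewrite mulrBr.
  by rewrite sumrB -mulr_suml d_sum0 mul0r subr0.
under eq_bigr do rewrite dw.
apply: le_trans (_ : \sum_b \sum_a `|d a| * `|w a b| <= _).
  apply: ler_sum => b _; apply: le_trans (ler_norm_sum _ _ _) _.
  by apply: ler_sum => a _; rewrite normrM.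
rewrite exchange_big /= mulr_sumr; apply: ler_sum => a _.
rewrite -mulr_sumr mulrC; case: (boolP (A a)) => Aa; last first.
  by rewrite d_out // normr0 !mulr0.
apply: ler_wpM2r; first exact: normr_ge0.
have w_ge0 b : 0 <= w a b.
  rewrite /w; case: (eqVneq b s) => [->|_]; first by rewrite mulr1 subr_ge0 minor.
  by rewrite mulr0 subr0 nstep_ge0.
under eq_bigr do rewrite ger0_norm //.
rewrite /w sumrB nstep_sum1 // -mulr_sumr (bigD1 s) //= eqxx.
by rewrite big1 ?addr0 ?mulr1 // => b /negbTE ->.
Qed.

Variable pi : S -> R.
Hypothesis pi_stationary : forall b, \sum_a pi a * P a b = pi b.

Lemma nstep_stationary n b : \sum_a pi a * nstep n a b = pi b.
Proof.
elim: n b => [|n IHn] b /=.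
  rewrite (bigD1 b) //= eqxx mulr1 big1 ?addr0 // => a /negbTE.
  by rewrite eq_sym => ->; rewrite mulr0.
under eq_bigr do rewrite mulr_sumr.
rewrite exchange_big /= -pi_stationary; apply: eq_bigr => c _.
by rewrite -IHn mulr_suml; apply: eq_bigr => a _; rewrite mulrA.
Qed.

Hypothesis pi_ge0 : forall a, 0 <= pi a.
Hypothesis pi_out : forall a, ~~ A a -> pi a = 0.
Hypothesis pi_sum1 : \sum_a pi a = 1.

Definition dist1 (f g : S -> R) : R := \sum_b `|f b - g b|.

Lemma dist1_nstep_le2 n a : A a -> dist1 (nstep n a) pi <= 2.
Proof.
move=> Aa; apply: le_trans (_ : \sum_b (nstep n a b + pi b) <= _).
  apply: ler_sum => b _; apply: le_trans (ler_normB _ _) _.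
  by rewrite !ger0_norm ?nstep_ge0.
by rewrite big_split /= nstep_sum1 // pi_sum1.
Qed.

Variables (n0 : nat) (s : S) (del : R).
Hypothesis minor : forall a, A a -> del <= nstep n0 a s.

Lemma dist1_nstep_contract t a : A a ->
  dist1 (nstep (t + n0) a) pi <= (1 - del) * dist1 (nstep t a) pi.
Proof.
move=> Aa; rewrite /dist1.
have -> : \sum_b `|nstep (t + n0) a b - pi b| =
          \sum_b `|\sum_c (nstep t a c - pi c) * nstep n0 c b|.
  apply: eq_bigr => b _; rewrite nstep_add -(nstep_stationary n0 b) -sumrB.
  by congr `|_|; apply: eq_bigr => c _; rewrite mulrBl.
apply: doeblin_contraction minor.
  by move=> c Ac; rewrite nstep_closed // pi_out // subr0.
by rewrite sumrB nstep_sum1 // pi_sum1 subrr.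
Qed.

Lemma minor_le1 a : A a -> del <= 1.
Proof. by move=> Aa; apply: le_trans (minor Aa) (nstep_le1 _ _ Aa). Qed.

Lemma dist1_nstep_geometric t a : A a ->
  dist1 (nstep t a) pi <= (1 - del) ^+ (t %/ n0) * 2.
Proof.
move=> Aa; rewrite {1}(divn_eq t n0); elim: (t %/ n0)%N => [|k IHk].
  by rewrite mul0n add0n expr0 mul1r dist1_nstep_le2.
rewrite mulSn -addnA addnC; apply: le_trans (dist1_nstep_contract _ Aa) _.
by rewrite exprS -mulrA ler_wpM2l // subr_ge0 (minor_le1 Aa).
Qed.

Lemma nstep_cvg (B : pred S) a : A a -> (0 < n0)%N -> 0 < del ->
  (fun t => \sum_(b | B b) nstep t a b) @ \oo --> \sum_(b | B b) pi b.
Proof.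
move=> Aa n0_gt0 del_gt0.
have dist_B t : `|\sum_(b | B b) pi b - \sum_(b | B b) nstep t a b| <=
                (1 - del) ^+ (t %/ n0) * 2.
  apply: le_trans (dist1_nstep_geometric t Aa).
  rewrite -sumrB; apply: le_trans (ler_norm_sum _ _ _) _.
  rewrite /dist1 [X in _ <= X](bigID B) /=; apply: ler_wpDr.
    by apply: sumr_ge0.
  by apply: ler_sum => b _; rewrite distrC.
have q_lt1 : `|1 - del| < 1.
  by rewrite ger0_norm ?subr_ge0 ?(minor_le1 Aa) // ltrBlDr ltrDl.
apply/cvgrPdist_le => eps eps_gt0.
have /cvgr0Pnorm_le/(_ (eps / 2)) := cvg_expr q_lt1.
rewrite divr_gt0 // => /(_ isT) [K _ HK].
exists (K * n0)%N => // t /= Kt; apply: le_trans (dist_B t) _.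
have /HK : (K <= t %/ n0)%N by rewrite leq_divRL.
by rewrite /= normrX ger0_norm ?subr_ge0 ?(minor_le1 Aa) // -ler_pdivlMr.
Qed.

End MarkovChain.

Section Reachability.
Variables (R : realType) (S : finType) (P : S -> S -> R) (A : pred S).
Hypothesis P_ge0 : forall a b, 0 <= P a b.
Variables (s : S) (phi : S -> nat).
Hypothesis P_ss_gt0 : 0 < P s s.
Hypothesis descent : forall a, A a -> a != s ->
  exists b, [/\ A b, 0 < P a b & (phi b < phi a)%N].

Lemma nstep_reach a : A a -> exists n, 0 < nstep P n a s.
Proof.
suff reach_k k : forall a, (phi a < k)%N -> A a -> exists n, 0 < nstep P n a s.
  exact: (reach_k (phi a).+1).
elim: k => // k IHk {}a phi_a Aa.
have [->|a_s] := eqVneq a s; first by exists 0%N; rewrite /= eqxx ltr01.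
have [b [Ab Pab phi_b]] := descent Aa a_s.
have [n nstep_gt0] := IHk b (leq_trans phi_b phi_a) Ab.
exists n.+1; rewrite nstepSl; apply: lt_le_trans (mulr_gt0 Pab nstep_gt0) _.
apply: (ler_sum_term (F := fun c => P a c * nstep P n c s) b) => c.
by rewrite mulr_ge0 ?nstep_ge0.
Qed.

Lemma nstep_gt0_mono a n m :
  (n <= m)%N -> 0 < nstep P n a s -> 0 < nstep P m a s.
Proof.
move=> /subnK <-; elim: (m - n)%N => // k IHk /IHk nstep_gt0 /=.
apply: lt_le_trans (mulr_gt0 nstep_gt0 P_ss_gt0) _.
apply: (ler_sum_term (F := fun c => nstep P _ a c * P c s) s) => c.
by rewrite mulr_ge0 ?nstep_ge0.
Qed.

Lemma descent_minorization : exists n0 del,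
  [/\ (0 < n0)%N, 0 < del & forall a, A a -> del <= nstep P n0 a s].
Proof.
have [n reach_n] : exists n, forall a, A a -> 0 < nstep P n a s.
  by apply: fin_uniform_index nstep_reach => a; apply: nstep_gt0_mono.
have [del del_gt0 minor] :=
  fin_lower_bound_gt0 (A := A) (f := fun a => nstep P n.+1 a s)
    (fun a Aa => nstep_gt0_mono (leqnSn n) (reach_n a Aa)).
by exists n.+1, del.
Qed.

End Reachability.

Lemma edges_gt0 (V : finType) (e : rel V) :
  (1 < #|V|)%N -> (forall x y, connect e x y) -> (0 < #|edges e|)%N.
Proof.
move=> /card_gt1P[x [y [_ _ xy]]] e_conn.
have /connectP[[|z p] /= pth y_last] := e_conn x y; first by rewrite y_last eqxx in xy.
by apply/card_gt0P; exists (x, z); rewrite inE; case/andP: pth.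
Qed.

Lemma exists_height (V : finType) (e : rel V) (x : V) :
    (forall v, connect e v x) ->
  exists h : V -> nat, forall v, v != x -> exists2 w, e v w & (h w < h v)%N.
Proof.
move=> conn_x.
have path_len v : exists n, [exists p : n.-tuple V, path e v p && (last v p == x)].
  have /connectP[p pth x_last] := conn_x v; exists (size p).
  by apply/existsP; exists (in_tuple p); rewrite /= pth -x_last eqxx.
exists (fun v => ex_minn (path_len v)) => v v_x.
case: ex_minnP => n /existsP[[[|w p] /= size_p]].
  by move=> /eqP v_eq; rewrite v_eq eqxx in v_x.
move=> /andP[/andP[e_vw pth] x_last] n_min; exists w => //.
case: ex_minnP => m _ m_min; rewrite -(eqP size_p) ltnS.
by apply: m_min; apply/existsP; exists (in_tuple p); rewrite /= pth x_last.
Qed.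

Section WeightCounting.
Variables (R : comNzRingType) (M : nat).

Definition weight_poly : {poly R} := \poly_(i < M.+1) i.+1%:R.

Lemma weight_polyE : weight_poly = \sum_(k < M.+1) k.+1%:R *: 'X^k.
Proof. exact: poly_def. Qed.

Lemma coef_weight_polyX n m :
  (m <= M)%N -> (weight_poly ^+ n.+1)`_m = 'C(m + 2 * n + 1, m)%:R.
Proof.
elim: n m => [|n IHn] m le_mM.
  by rewrite expr1 coef_poly ltnS le_mM muln0 addn0 addn1 binSn.
rewrite exprSr coefM.
have -> : \sum_(j < m.+1) (weight_poly ^+ n.+1)`_j * weight_poly`_(m - j) =
          \sum_(j < m.+1) ('C(j + (2 * n + 1), j) * (m - j).+1)%N%:R.
  apply: eq_bigr => j _.
  have le_jM : (j <= M)%N by apply: leq_trans le_mM; rewrite -ltnS.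
  by rewrite IHn // coef_poly ltnS (leq_trans (leq_subr _ _) le_mM) natrM addnA.
by rewrite -natr_sum hockey_stick_weighted; congr (_%:R); congr 'C(_, _); lia.
Qed.

Variable V : finType.

Lemma coef_prod_config (g : V -> nat -> R) :
  (\prod_v \sum_(k < M.+1) g v k *: 'X^k)`_M =
  \sum_(xi : config V M | in_CNM xi) \prod_v g v (xi v).
Proof.
rewrite bigA_distr_bigA coef_sum [RHS]big_mkcond /=; apply: eq_bigr => xi _.
have -> : \prod_v (g v (xi v) *: 'X^(xi v)) =
          (\prod_v g v (xi v)) *: 'X^(\sum_v (xi v : nat)).
  rewrite -mul_polyC rmorph_prod -prodrXr -big_split /=.
  by apply: eq_bigr => v _; rewrite mul_polyC.
by rewrite coefZ coefXn eq_sym /in_CNM; case: eqP; rewrite ?mulr1 ?mulr0.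
Qed.

Definition config_weight (xi : config V M) : R := \prod_v (xi v).+1%:R.

Lemma sum_config_weight : (0 < #|V|)%N ->
  \sum_(xi | in_CNM xi) config_weight xi = 'C(M + 2 * #|V| - 1, M)%:R.
Proof.
move=> V_gt0; rewrite -(coef_prod_config (fun _ k => k.+1%:R)).
rewrite (eq_bigr (fun _ => weight_poly)) => [|v _]; last by rewrite weight_polyE.
rewrite prodr_const; case: #|V| V_gt0 => // n _.
by rewrite coef_weight_polyX //; congr (_%:R); congr 'C(_, _); lia.
Qed.

(* Fixing [xi x = c] replaces the factor at [x] by the monomial [(c + 1) X^c]. *)
Lemma sum_config_weight_at x c : (1 < #|V|)%N -> (c <= M)%N ->
  \sum_(xi | in_CNM xi && (xi x == c :> nat)) config_weight xi =
  c.+1%:R * 'C(M - c + 2 * #|V| - 3, M - c)%:R.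
Proof.
move=> V_gt1 le_cM.
pose g v k : R := if v == x then (k == c)%:R * k.+1%:R else k.+1%:R.
have -> : \sum_(xi | in_CNM xi && (xi x == c :> nat)) config_weight xi =
          \sum_(xi : config V M | in_CNM xi) \prod_v g v (xi v).
  rewrite big_mkcondr /=; apply: eq_bigr => xi _.
  rewrite /config_weight (bigD1 x) //= [in RHS](bigD1 x) //= /g eqxx.
  rewrite [in RHS](eq_bigr (fun v => (xi v).+1%:R)) => [|v /negbTE -> //].
  by case: eqP; rewrite ?mul1r ?mul0r.
rewrite -coef_prod_config (bigD1 x) //=.
rewrite (eq_bigr (P := fun v => v != x) (fun _ => weight_poly)); last first.
  by move=> v /negbTE v_x; rewrite weight_polyE /g; apply: eq_bigr => k _; rewrite v_x.
have -> : \sum_(k < M.+1) g x k *: 'X^k = c.+1%:R *: 'X^c.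
  rewrite (bigD1 (Ordinal (le_cM : (c < M.+1)%N))) //= /g !eqxx mul1r.
  rewrite big1 ?addr0 // => k k_c.
  suff /negbTE -> : k != c :> nat by rewrite mul0r scale0r.
  by apply: contra k_c => /eqP k_c; apply/eqP/val_inj.
rewrite prodr_const -scalerAl coefZ coefXnM ltnNge le_cM /= cardC1.
case: #|V| V_gt1 => [|[|n]] // _.
by rewrite coef_weight_polyX ?leq_subr //; congr (_ * 'C(_, _)%:R); lia.
Qed.

End WeightCounting.

Section SavingModel.
Variables (R : realType) (V : finType) (e : rel V) (M : nat).
Hypothesis e_irr : irreflexive e.
Local Notation config := (config V M).

Definition edge_step (xi xi' : config) (x y : V) : R :=
  \sum_(cx < (xi x).+1) \sum_(cy < (xi y).+1)
    \sum_(u < (xi x + xi y - cx - cy).+1)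
      ((xi x).+1%:R^-1 / (xi y).+1%:R / (xi x + xi y - cx - cy).+1%:R *
       (if [forall z, xi' z == update xi x y cx u z :> nat] then 1 else 0)).

Lemma step_probE xi xi' : step_prob R e xi xi' =
  #|edges e|%:R^-1 * \sum_(p in edges e) edge_step xi xi' p.1 p.2.
Proof. by []. Qed.

Lemma edge_neq p : p \in edges e -> p.1 != p.2.
Proof. by rewrite inE; case: eqP => // ->; rewrite e_irr. Qed.

Definition edge_move (xi xi' : config) (x y : V) : bool :=
  [forall z, (z != x) && (z != y) ==> (xi' z == xi z :> nat)] &&
  (xi' x + xi' y == xi x + xi y)%N.

Lemma edge_move_refl xi x y : edge_move xi xi x y.
Proof. by rewrite /edge_move eqxx andbT; apply/forallP => z; apply/implyP. Qed.

Lemma edge_moveC xi xi' x y : edge_move xi xi' x y = edge_move xi' xi x y.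
Proof.
rewrite /edge_move eq_sym; congr (_ && _).
by apply: eq_forallb => z; rewrite [X in _ ==> X]eq_sym.
Qed.

Lemma edge_move_CNM xi xi' x y :
  x != y -> edge_move xi xi' x y -> in_CNM xi' = in_CNM xi.
Proof.
move=> xy /andP[/forallP same_off /eqP same_xy]; rewrite /in_CNM.
rewrite (bigD2 _ _ xy) [in RHS](bigD2 _ _ xy) /= !addnA same_xy.
by congr (_ + _ == _)%N; apply: eq_bigr => z z_off; apply/eqP/(implyP (same_off z)).
Qed.

Lemma in_CNM_le_pair (xi : config) x y :
  in_CNM xi -> x != y -> (xi x + xi y <= M)%N.
Proof.
move=> /eqP xi_M xy; rewrite -[X in (_ <= X)%N]xi_M (bigD2 _ _ xy) /=.
by rewrite addnA leq_addr.
Qed.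

Lemma forall_updateE (xi xi' : config) x y cx cy u : x != y ->
    (cx <= xi x)%N -> (cy <= xi y)%N -> (u <= xi x + xi y - cx - cy)%N ->
  [forall z, xi' z == update xi x y cx u z :> nat] =
  [&& edge_move xi xi' x y, (cx <= xi' x)%N, (cy <= xi' y)%N
    & (xi' x == cx + u :> nat)%N].
Proof.
move=> xy le_cx le_cy le_u; have /negbTE yx : y != x by rewrite eq_sym.
apply/forallP/idP => [upd|].
  have := upd x; rewrite /update eqxx => /eqP xi'_x.
  have := upd y; rewrite /update yx eqxx => /eqP xi'_y.
  have same_off : [forall z, (z != x) && (z != y) ==> (xi' z == xi z :> nat)].
    apply/forallP => z; apply/implyP => /andP[/negbTE zx /negbTE zy].
    by have := upd z; rewrite /update zx zy.
  by rewrite /edge_move same_off /=; apply/and4P; split; try apply/eqP; lia.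
move=> /and4P[/andP[/forallP same_off /eqP same_xy] le_cx' le_cy' /eqP xi'_x] z.
rewrite /update; have [->|zx] := eqVneq z x; first exact/eqP.
have [->|zy] := eqVneq z y; first by apply/eqP; lia.
by have := same_off z; rewrite zx zy.
Qed.

Lemma sum_update_indicator (xi xi' : config) x y cx cy : x != y ->
    (cx <= xi x)%N -> (cy <= xi y)%N ->
  \sum_(u < (xi x + xi y - cx - cy).+1)
     (if [forall z, xi' z == update xi x y cx u z :> nat] then 1 else 0 : R) =
  [&& edge_move xi xi' x y, (cx <= xi' x)%N & (cy <= xi' y)%N]%:R.
Proof.
move=> xy le_cx le_cy.
under eq_bigr => u _ do rewrite (forall_updateE xi' xy le_cx le_cy (ltn_ord u)).
case: (boolP [&& _, _ & _]) => [/and3P[mv le_cx' le_cy'] | not_mv]; last first.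
  apply: big1 => u _; case: and4P => // -[mv le_cx' le_cy' _].
  by rewrite mv le_cx' le_cy' in not_mv.
have lt_u : (xi' x - cx < (xi x + xi y - cx - cy).+1)%N.
  by move: mv => /andP[_ /eqP]; lia.
rewrite mv le_cx' le_cy' (bigD1 (Ordinal lt_u)) //= subnKC // eqxx big1 ?addr0 //.
by move=> u u_ne; case: eqP => // xi'_x; case/eqP: u_ne; apply: val_inj => /=; lia.
Qed.

Definition exchange_weight (a b k l : nat) : R :=
  \sum_(cx < a.+1) \sum_(cy < b.+1)
     ((cx <= k)%N%:R * ((cy <= l)%N%:R * (a + b - cx - cy).+1%:R^-1)).

Lemma exchange_weightE a b k l : exchange_weight a b k l =
  \sum_(0 <= cx < (minn a k).+1) \sum_(0 <= cy < (minn b l).+1)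
     (a + b - cx - cy).+1%:R^-1.
Proof.
rewrite /exchange_weight.
under eq_bigr => cx _ do
  rewrite -mulr_sumr (sum_indicator_leq (fun cy => (a + b - cx - cy).+1%:R^-1)).
by rewrite (sum_indicator_leq
  (fun cx => \sum_(0 <= cy < (minn b l).+1) (a + b - cx - cy).+1%:R^-1)).
Qed.

Lemma exchange_weightC a b k l :
  (a + b = k + l)%N -> exchange_weight a b k l = exchange_weight k l a b.
Proof. by move=> ab_kl; rewrite !exchange_weightE ab_kl (minnC a) (minnC b). Qed.

Lemma exchange_weight_gt0 a b k l : 0 < exchange_weight a b k l.
Proof.
have inv_ge0 n : 0 <= n%:R^-1 :> R by rewrite invr_ge0.
rewrite exchange_weightE !big_nat_recl //=.
apply: ltr_wpDr; first by do 2!apply: sumr_ge0 => ? _.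
by apply: ltr_wpDr; [apply: sumr_ge0 | rewrite invr_gt0 ltr0n].
Qed.

Lemma edge_stepE xi xi' x y : x != y -> edge_step xi xi' x y =
  (edge_move xi xi' x y)%:R *
  ((xi x).+1%:R^-1 * (xi y).+1%:R^-1 * exchange_weight (xi x) (xi y) (xi' x) (xi' y)).
Proof.
move=> xy; rewrite /edge_step /exchange_weight !mulr_sumr; apply: eq_bigr => cx _.
rewrite !mulr_sumr; apply: eq_bigr => cy _.
rewrite -mulr_sumr (sum_update_indicator xi' xy (ltn_ord cx) (ltn_ord cy)).
by case: edge_move; case: (cx <= _)%N; case: (cy <= _)%N => /=; ring.
Qed.

Lemma edge_step_ge0 xi xi' x y : 0 <= edge_step xi xi' x y.
Proof.
apply: sumr_ge0 => cx _; apply: sumr_ge0 => cy _; apply: sumr_ge0 => u _.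
by rewrite mulr_ge0 ?divr_ge0 ?mulr_ge0 ?invr_ge0 //; case: ifP.
Qed.

Lemma sum_config_indicator (f : V -> nat) : (forall z, f z <= M)%N ->
  \sum_(xi : config) (if [forall z, xi z == f z :> nat] then 1 else 0 : R) = 1.
Proof.
move=> f_le; pose xi_f : config := [ffun z => inord (f z)].
have xi_fE z : xi_f z = f z :> nat by rewrite ffunE inordK // ltnS.
have xi_f_ind : [forall z, xi_f z == f z :> nat] by apply/forallP => z; rewrite xi_fE.
rewrite (bigD1 xi_f) //= xi_f_ind big1 ?addr0 // => xi xi_ne; case: forallP => // xiE.
by case/eqP: xi_ne; apply/ffunP => z; apply: val_inj; rewrite /= xi_fE; apply/eqP.
Qed.

Lemma edge_step_sum1 (xi : config) x y :
  in_CNM xi -> x != y -> \sum_xi' edge_step xi xi' x y = 1.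
Proof.
move=> xi_CNM xy; have le_xy := in_CNM_le_pair xi_CNM xy.
transitivity (\sum_(cx < (xi x).+1) \sum_(cy < (xi y).+1)
   \sum_(u < (xi x + xi y - cx - cy).+1)
     ((xi x).+1%:R^-1 / (xi y).+1%:R / (xi x + xi y - cx - cy).+1%:R : R)).
  rewrite exchange_big; apply: eq_bigr => cx _.
  rewrite exchange_big; apply: eq_bigr => cy _.
  rewrite exchange_big; apply: eq_bigr => u _.
  rewrite -mulr_sumr sum_config_indicator ?mulr1 // => z.
  have := ltn_ord cx; have := ltn_ord cy; have := ltn_ord u; have := ltn_ord (xi z).
  by rewrite /update; case: (z == x); last case: (z == y); lia.
under eq_bigr => cx _ do under eq_bigr => cy _ do rewrite sumr_ord_div.
under eq_bigr => cx _ do rewrite sumr_ord_div -[_^-1]mul1r.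
exact: sumr_ord_div.
Qed.

Definition saving_weight (xi : config) : R := (in_CNM xi)%:R * config_weight R xi.

Lemma edge_step_balance xi xi' x y : x != y ->
  saving_weight xi * edge_step xi xi' x y = saving_weight xi' * edge_step xi' xi x y.
Proof.
move=> xy; rewrite !edge_stepE // (edge_moveC xi').
have [mv|] := boolP (edge_move xi xi' x y); last by rewrite !mul0r !mulr0.
rewrite /saving_weight /config_weight (edge_move_CNM xy mv).
rewrite (bigD2 _ _ xy) [in RHS](bigD2 _ _ xy) /=.
move: mv => /andP[/forallP same_off /eqP same_xy].
rewrite (exchange_weightC same_xy).
have -> : \prod_(v | (v != x) && (v != y)) (xi' v).+1%:R =
          \prod_(v | (v != x) && (v != y)) (xi v).+1%:R :> R.
  by apply: eq_bigr => z z_off; rewrite (eqP (implyP (same_off z) z_off)).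
by field; rewrite !nat1r !pnatr_eq0.
Qed.

Lemma step_prob_ge0 (xi xi' : config) : 0 <= step_prob R e xi xi'.
Proof.
rewrite step_probE mulr_ge0 ?invr_ge0 //.
by apply: sumr_ge0 => p _; apply: edge_step_ge0.
Qed.

Lemma step_prob_closed (xi xi' : config) :
  in_CNM xi -> ~~ in_CNM xi' -> step_prob R e xi xi' = 0.
Proof.
move=> xi_CNM xi'_CNM; rewrite step_probE big1 ?mulr0 // => p /edge_neq p12.
rewrite edge_stepE //; case: (boolP (edge_move _ _ _ _)) => [mv|]; last by rewrite mul0r.
by rewrite (edge_move_CNM p12 mv) xi_CNM in xi'_CNM.
Qed.

Lemma step_prob_balance (xi xi' : config) :
  saving_weight xi * step_prob R e xi xi' = saving_weight xi' * step_prob R e xi' xi.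
Proof.
rewrite !step_probE !(mulrCA (saving_weight _)) !mulr_sumr.
by apply: eq_bigr => p /edge_neq p12; rewrite edge_step_balance.
Qed.

Lemma step_prob_gt0 (xi xi' : config) x y :
  e x y -> edge_move xi xi' x y -> 0 < step_prob R e xi xi'.
Proof.
move=> exy mv; have xy : x != y by apply: contraTneq exy => ->; rewrite e_irr.
have xy_edge : (x, y) \in edges e by rewrite inE.
have E_gt0 : (0 < #|edges e|)%N by apply/card_gt0P; exists (x, y).
rewrite step_probE mulr_gt0 ?invr_gt0 ?ltr0n //.
rewrite big_mkcond /=; apply: lt_le_trans (ler_sum_term (x, y) _) => [|p].
  by rewrite xy_edge edge_stepE // mv mul1r !mulr_gt0 ?exchange_weight_gt0 ?invr_gt0.
by case: ifP => // _; apply: edge_step_ge0.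
Qed.

Hypothesis edges_gt0 : (0 < #|edges e|)%N.

Lemma step_prob_sum1 (xi : config) : in_CNM xi -> \sum_xi' step_prob R e xi xi' = 1.
Proof.
move=> xi_CNM; under eq_bigr do rewrite step_probE.
rewrite -mulr_sumr exchange_big /= (eq_bigr (fun _ => 1)) => [|p /edge_neq]; last first.
  exact: edge_step_sum1.
by rewrite sumr_const mulVf // pnatr_eq0 -lt0n.
Qed.

Lemma saving_weight_stationary (xi' : config) :
  \sum_xi saving_weight xi * step_prob R e xi xi' = saving_weight xi'.
Proof.
under eq_bigr do rewrite step_prob_balance.
rewrite -mulr_sumr; case: (boolP (in_CNM xi')) => [xi'_CNM | /negbTE xi'_CNM].
  by rewrite step_prob_sum1 ?mulr1.
by rewrite /saving_weight xi'_CNM !mul0r.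
Qed.

End SavingModel.

Section Concentration.
Variables (R : realType) (V : finType) (e : rel V) (M : nat) (x : V).
Hypothesis e_irr : irreflexive e.
Local Notation config := (config V M).
Local Notation P := (@step_prob R V e M).

Definition concentrated : config := [ffun z => if z == x then ord_max else ord0].

Lemma not_concentrated (xi : config) : in_CNM xi -> xi != concentrated ->
  exists2 v, v != x & (0 < xi v)%N.
Proof.
move=> xi_CNM; apply: contraNP => no_v; apply/eqP/ffunP => z; apply: val_inj.
have xi_off y : y != x -> xi y = 0%N :> nat.
  move=> y_x; apply/eqP; rewrite eqn0Ngt; apply/negP => xi_y_gt0.
  by apply: no_v; exists y.
rewrite ffunE; have [->|z_x] := eqVneq z x; last exact: xi_off.
move: xi_CNM; rewrite /in_CNM (bigD1 x) //= big1 ?addn0 => [/eqP//|y].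
exact: xi_off.
Qed.

Definition potential (h : V -> nat) (xi : config) : nat := (\sum_z xi z * h z)%N.

(* Moving all coins of [v] to a neighbour [w] closer to [x] lowers the potential. *)
Lemma step_descent (h : V -> nat) :
    (forall v, v != x -> exists2 w, e v w & (h w < h v)%N) ->
  forall xi, in_CNM xi -> xi != concentrated ->
  exists xi', [/\ in_CNM xi', 0 < P xi xi' & (potential h xi' < potential h xi)%N].
Proof.
move=> h_desc xi xi_CNM xi_ne.
have [v v_x xi_v_gt0] := not_concentrated xi_CNM xi_ne.
have [w e_vw h_w] := h_desc v v_x.
have vw : v != w by apply: contraTneq e_vw => ->; rewrite e_irr.
pose xi' : config :=
  [ffun z => if z == v then ord0 else if z == w then inord (xi v + xi w) else xi z].
have xi'_v : xi' v = 0%N :> nat by rewrite ffunE eqxx.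
have xi'_w : xi' w = (xi v + xi w)%N :> nat.
  by rewrite ffunE eq_sym (negbTE vw) eqxx inordK // ltnS in_CNM_le_pair.
have xi'_off z : z != v -> z != w -> xi' z = xi z.
  by move=> /negbTE zv /negbTE zw; rewrite ffunE zv zw.
have mv : edge_move xi xi' v w.
  rewrite /edge_move xi'_v xi'_w add0n eqxx andbT.
  by apply/forallP => z; apply/implyP => /andP[zv zw]; rewrite xi'_off.
exists xi'; split; first by rewrite (edge_move_CNM vw mv).
  exact: (step_prob_gt0 R e_irr e_vw mv).
rewrite /potential (bigD2 _ _ vw) [X in (_ < X)%N](bigD2 _ _ vw) /= xi'_v xi'_w.
rewrite (eq_bigr (fun z => xi z * h z)%N) => [|z /andP[zv zw]]; last first.
  by rewrite xi'_off.
by rewrite mul0n add0n mulnDl -addnA ltn_add2r ltn_pmul2l.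
Qed.

Lemma saving_minorization : (0 < #|edges e|)%N -> (forall v, connect e v x) ->
  exists n0 del, [/\ (0 < n0)%N, 0 < del &
    forall xi, in_CNM xi -> del <= nstep P n0 xi concentrated].
Proof.
move=> /card_gt0P[[v w] vw_edge] conn_x.
have [h h_desc] := exists_height conn_x.
have stay : 0 < P concentrated concentrated.
  rewrite inE in vw_edge.
  by apply: (step_prob_gt0 R e_irr vw_edge); rewrite edge_move_refl.
exact: (descent_minorization (@step_prob_ge0 R V e M) stay (step_descent h_desc)).
Qed.

End Concentration.

Section StationaryLaw.
Variables (R : realType) (V : finType) (e : rel V) (M : nat).
Local Notation config := (config V M).

Lemma law_nstep (xi0 : config) t :
  law R e xi0 t =1 nstep (@step_prob R V e M) t xi0.
Proof. by elim: t => [|t IHt] xi //=; apply: eq_bigr => xi' _; rewrite IHt. Qed.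

Definition saving_law (xi : config) : R :=
  saving_weight R xi / 'C(M + 2 * #|V| - 1, M)%:R.

Lemma sum_saving_weight (B : pred config) :
  \sum_(xi | B xi) saving_weight R xi =
  \sum_(xi | in_CNM xi && B xi) config_weight R xi.
Proof.
rewrite big_mkcondl /=; apply: eq_bigr => xi _.
by rewrite /saving_weight; case: in_CNM; rewrite ?mul1r ?mul0r.
Qed.

Lemma saving_law_ge0 xi : 0 <= saving_law xi.
Proof. by rewrite !mulr_ge0 ?invr_ge0 // prodr_ge0. Qed.

Lemma saving_law_closed xi : ~~ in_CNM xi -> saving_law xi = 0.
Proof. by move=> /negbTE xi_CNM; rewrite /saving_law /saving_weight xi_CNM !mul0r. Qed.

Lemma saving_law_sum1 : (0 < #|V|)%N -> \sum_xi saving_law xi = 1.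
Proof.
move=> V_gt0; rewrite -mulr_suml (sum_saving_weight xpredT).
rewrite (eq_bigl (@in_CNM V M)) => [|xi]; last by rewrite andbT.
by rewrite sum_config_weight // mulfV // pnatr_eq0 -lt0n bin_gt0; lia.
Qed.

Lemma saving_law_marginal x c : (1 < #|V|)%N -> (c <= M)%N ->
  \sum_(xi : config | xi x == c :> nat) saving_law xi =
  c.+1%:R * 'C(M - c + 2 * #|V| - 3, 2 * #|V| - 3)%:R
    / 'C(M + 2 * #|V| - 1, 2 * #|V| - 1)%:R.
Proof.
move=> V_gt1 le_cM; rewrite -mulr_suml sum_saving_weight sum_config_weight_at //.
rewrite (_ : M - c + 2 * #|V| - 3 = M - c + (2 * #|V| - 3))%N; last by lia.
by rewrite (_ : M + 2 * #|V| - 1 = M + (2 * #|V| - 1))%N ?binC //; lia.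
Qed.

Hypotheses (e_irr : irreflexive e) (edges_gt0 : (0 < #|edges e|)%N).

Lemma saving_law_stationary xi' :
  \sum_xi saving_law xi * step_prob R e xi xi' = saving_law xi'.
Proof.
rewrite /saving_law -(saving_weight_stationary R e_irr edges_gt0) mulr_suml.
by apply: eq_bigr => xi _; rewrite mulrAC.
Qed.

End StationaryLaw.

Unset Implicit Arguments.

Theorem theorem3 (R : realType) (V : finType) (e : rel V) (M : nat)
  (e_sym : symmetric e) (e_irr : irreflexive e)
  (e_conn : forall x y : V, connect e x y)
  (N_ge2 : (2 <= #|V|)%N)
  (xi0 : config V M) (xi0_in : in_CNM xi0)
  (x : V) (c : nat) (hc : (c <= M)%N) :
  (fun t : nat => prob_at R e xi0 t x c) @ \oo -->
    ((c.+1)%:R * ('C(M - c + 2 * #|V| - 3, 2 * #|V| - 3))%:R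
       / ('C(M + 2 * #|V| - 1, 2 * #|V| - 1))%:R : R).
Proof.
have E_gt0 := edges_gt0 N_ge2 e_conn.
have [n0 [del [n0_gt0 del_gt0 minor]]] :=
  saving_minorization R M e_irr E_gt0 (fun v => e_conn v x).
rewrite -(saving_law_marginal R x N_ge2 hc).
rewrite /prob_at; under eq_fun => t do under eq_bigr => xi _ do rewrite law_nstep.
exact: (nstep_cvg (@step_prob_ge0 R V e M) (@step_prob_sum1 R V e M e_irr E_gt0)
  (@step_prob_closed R V e M e_irr) (saving_law_stationary R e_irr E_gt0)
  (@saving_law_ge0 R V M) (@saving_law_closed R V M) (saving_law_sum1 R M (ltnW N_ge2))
  minor xi0_in n0_gt0 del_gt0).
Qed.
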